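(* Let $L$ be a unimodular lattice, $c\colon L\to L$ an involution, and $v\in L_-(c)$ with $v^2=-2$; put $c_v=c\circ s_v$. Then (1) if $v$ is odd, then $d(c_v)=d(c)+1$; (2) if $v$ is even, then $d(c_v)=d(c)-1$; (3) $v$ is a Wu element with respect to $c$ if and only if $c_v$ is an even involution. In particular, if $c_v$ is even, then $d(c_v)=d(c)-1$.
   Context: A lattice is a finite rank free abelian group with an integral symmetric bilinear form $\langle x,y\rangle$, $x^2=\langle x,x\rangle$. Standing assumption: if $L$ is odd, it has a characteristic element (an element $w$ with $x^2\equiv\langle w,x\rangle \bmod 2$ for all $x$) lying in $L_+(c)$ or in $L_-(c)$. $L_\pm(c)=\operatorname{Ker}(1\mp c)$; their discriminant groups are $2$-periodic and isomorphic to $L/(L_++L_-)$; $d(c)$ is the rank of this $2$-periodic group. For $v^2=-2$, $s_v(x)=x+\langle x,v\rangle v$ (it commutes with $c$ since $v\in L_-$). An element $h\in L_-(c)$ is even if $\langle h,l\rangle$ is even for all $l\in L_-(c)$, odd otherwise; an even $h\in L_-(c)$ is a Wu element if $x^2+\langle x,cx\rangle\equiv\langle x,h\rangle \bmod 2$ for all $x\in L$ (equivalently, $\tfrac12 h$ represents the characteristic element of the discriminant bilinear form of $L_-$). An involution $c$ is even if $\langle x,cx\rangle+x^2$ is even for all $x\in L$. *)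

From HB Require Import structures.
From mathcomp Require Import all_boot all_order all_algebra.
From mathcomp Require Import finmap boolp classical_sets cardinality.
Set Implicit Arguments. Unset Strict Implicit. Unset Printing Implicit Defensive.
Import Order.TTheory GRing.Theory Num.Theory.
Local Open Scope ring_scope.

(* A lattice of rank n is Z^n = 'rV[int]_n with Gram matrix G : 'M[int]_n;
   <x,y> = x G y^T.  An endomorphism given by a matrix C acts on row vectors
   by x |-> x *m C. *)

Definition lat_form (n : nat) (G : 'M[int]_n) (x y : 'rV[int]_n) : int :=
  (x *m G *m y^T) 0 0.

Definition lat_symmetric_gram (n : nat) (G : 'M[int]_n) : Prop := G^T = G.

Definition lat_unimodular (n : nat) (G : 'M[int]_n) : Prop :=
  \det G = 1 \/ \det G = -1.

Definition lat_odd_lattice (n : nat) (G : 'M[int]_n) : Prop :=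
  exists x : 'rV[int]_n, ~~ (2 %| lat_form G x x)%Z.

Definition lat_characteristic (n : nat) (G : 'M[int]_n) (w : 'rV[int]_n) : Prop :=
  forall x : 'rV[int]_n, (2 %| lat_form G x x - lat_form G w x)%Z.

Definition lat_isometry (n : nat) (G C : 'M[int]_n) : Prop :=
  forall x y : 'rV[int]_n, lat_form G (x *m C) (y *m C) = lat_form G x y.

Definition lat_involution (n : nat) (G C : 'M[int]_n) : Prop :=
  lat_isometry G C /\ C *m C = 1%:M.

Definition Lplus (n : nat) (C : 'M[int]_n) (x : 'rV[int]_n) : Prop := x *m C = x.
Definition Lminus (n : nat) (C : 'M[int]_n) (x : 'rV[int]_n) : Prop := x *m C = - x.

Definition in_Lpm (n : nat) (C : 'M[int]_n) (x : 'rV[int]_n) : Prop :=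
  exists a b, Lplus C a /\ Lminus C b /\ x = a + b.

Local Open Scope classical_set_scope.

Definition cosets_Lpm (n : nat) (C : 'M[int]_n) : set (set 'rV[int]_n) :=
  [set [set y | in_Lpm C (x - y)] | x in [set: 'rV[int]_n]].

Local Close Scope classical_set_scope.

(* d(c) = rank of the 2-periodic group L/(L_+ + L_-), i.e. log_2 of its order *)
Definition lat_dc (n : nat) (C : 'M[int]_n) : nat :=
  logn 2 (#|` fset_set (cosets_Lpm C)|)%fset.

(* the reflection s_v(x) = x + <x,v> v, as a matrix acting on rows *)
Definition lat_refl (n : nat) (G : 'M[int]_n) (v : 'rV[int]_n) : 'M[int]_n :=
  1%:M + (G *m v^T) *m v.

(* c_v = c o s_v : x |-> c (s_v x) = x *m lat_refl *m C *)
Definition lat_cv (n : nat) (G C : 'M[int]_n) (v : 'rV[int]_n) : 'M[int]_n :=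
  lat_refl G v *m C.

Definition lat_odd_elt (n : nat) (G C : 'M[int]_n) (h : 'rV[int]_n) : Prop :=
  exists l, Lminus C l /\ ~~ (2 %| lat_form G h l)%Z.
Definition lat_even_elt (n : nat) (G C : 'M[int]_n) (h : 'rV[int]_n) : Prop :=
  forall l, Lminus C l -> (2 %| lat_form G h l)%Z.

Definition lat_wu_element (n : nat) (G C : 'M[int]_n) (h : 'rV[int]_n) : Prop :=
  Lminus C h /\ lat_even_elt G C h /\
  forall x, (2 %| lat_form G x x + lat_form G x (x *m C) - lat_form G x h)%Z.

Definition lat_even_involution (n : nat) (G C : 'M[int]_n) : Prop :=
  forall x, (2 %| lat_form G x (x *m C) + lat_form G x x)%Z.

From HB Require Import structures.
From mathcomp Require Import all_boot all_order all_algebra.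
From mathcomp Require Import finmap boolp classical_sets cardinality.
From mathcomp Require Import zify ring.
Import Order.TTheory GRing.Theory Num.Theory.
Local Open Scope ring_scope.
Set Implicit Arguments. Unset Strict Implicit. Unset Printing Implicit Defensive.

(* Since 2x = (x + cx) + (x - cx), the subgroup L_+ + L_- contains 2L, so
   L/(L_+ + L_-) is a quotient of L/2L = F_2^n and 2^d(c) |Q_c| = 2^n, where Q_c is
   the image of L_+ + L_- in F_2^n.  If v is even, unimodularity gives x0 with
   x0 - c x0 = v; then x0 lies in L_+(c_v) but not in L_+ + L_-, and
   Q_(c_v) = Q_c + {0, x0}, so |Q_(c_v)| = 2 |Q_c|.  If v is odd, v is even for the
   involution -c_v, whose modification by v is -c, and d(-c) = d(c).  Part (3) is
   the identity <x, c_v x> = <x, c x> - <x, v>^2 together with a^2 = a mod 2. *)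

Lemma dvdz2M (a b : int) : (2 %| a * b)%Z = (2 %| a)%Z || (2 %| b)%Z.
Proof. by rewrite !dvdzE abszM Euclid_dvdM. Qed.

Lemma dvdz2_sqr_sub (a : int) : (2 %| a * a - a)%Z.
Proof. by rewrite -{3}[a]mulr1 -mulrBr dvdz2M; apply/orP; lia. Qed.

Section Form.
Variables (n : nat) (G : 'M[int]_n).
Implicit Types x y z : 'rV[int]_n.
Local Notation "<< x , y >>" := (lat_form G x y).

Lemma formDl x y z : << x + y, z >> = << x, z >> + << y, z >>.
Proof. by rewrite /lat_form !mulmxDl mxE. Qed.

Lemma formDr x y z : << z, x + y >> = << z, x >> + << z, y >>.
Proof. by rewrite /lat_form linearD mulmxDr mxE. Qed.

Lemma formZl (k : int) x z : << k *: x, z >> = k * << x, z >>.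
Proof. by rewrite /lat_form -!scalemxAl mxE. Qed.

Lemma formZr (k : int) x z : << z, k *: x >> = k * << z, x >>.
Proof. by rewrite /lat_form linearZ -scalemxAr mxE. Qed.

Lemma formNl x z : << - x, z >> = - << x, z >>.
Proof. by rewrite -scaleN1r formZl mulN1r. Qed.

Lemma formNr x z : << z, - x >> = - << z, x >>.
Proof. by rewrite -scaleN1r formZr mulN1r. Qed.

Lemma formBl x y z : << x - y, z >> = << x, z >> - << y, z >>.
Proof. by rewrite formDl formNl. Qed.

Lemma formBr x y z : << z, x - y >> = << z, x >> - << z, y >>.
Proof. by rewrite formDr formNr. Qed.

Lemma formC : lat_symmetric_gram G -> forall x y, << x, y >> = << y, x >>.
Proof.
move=> GT x y; rewrite /lat_form -[x *m G *m y^T]trmxK [in LHS]mxE.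
by rewrite !trmx_mul trmxK GT mulmxA.
Qed.

End Form.

Lemma eq_mx_mulmx n (A B : 'M[int]_n) :
  (forall x : 'rV[int]_n, x *m A = x *m B) -> A = B.
Proof. by move=> AB; apply/row_matrixP => i; rewrite !rowE AB. Qed.

Section Lpm.
Variables (n : nat) (C : 'M[int]_n).
Implicit Types x y a b : 'rV[int]_n.

Lemma in_Lpm_Lplus a : Lplus C a -> in_Lpm C a.
Proof. by move=> Ca; exists a, 0; rewrite /Lminus mul0mx oppr0 addr0. Qed.

Lemma in_Lpm_Lminus b : Lminus C b -> in_Lpm C b.
Proof. by move=> Cb; exists 0, b; rewrite /Lplus mul0mx add0r. Qed.

Lemma in_Lpm_add x y : in_Lpm C x -> in_Lpm C y -> in_Lpm C (x + y).
Proof.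
move=> [a [b [Ca [Cb ->]]]] [a' [b' [Ca' [Cb' ->]]]].
exists (a + a'), (b + b'); rewrite /Lplus /Lminus !mulmxDl Ca Cb Ca' Cb' opprD.
by rewrite addrACA.
Qed.

Lemma in_Lpm_sub x y : in_Lpm C x -> in_Lpm C y -> in_Lpm C (x - y).
Proof.
move=> [a [b [Ca [Cb ->]]]] [a' [b' [Ca' [Cb' ->]]]].
exists (a - a'), (b - b'); rewrite /Lplus /Lminus !mulmxBl Ca Cb Ca' Cb'.
by split=> //; split; [rewrite opprD | rewrite opprD addrACA].
Qed.

Lemma LplusN : Lplus (- C) = Lminus C.
Proof.
apply/funext => a; rewrite /Lplus /Lminus mulmxN; apply/propext.
by split=> [E | ->]; [apply: oppr_inj; rewrite opprK | rewrite opprK].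
Qed.

Lemma LminusN : Lminus (- C) = Lplus C.
Proof.
apply/funext => a; rewrite /Lplus /Lminus mulmxN; apply/propext.
by split=> [/oppr_inj | ->].
Qed.

Lemma in_LpmN : in_Lpm (- C) = in_Lpm C.
Proof.
rewrite /in_Lpm LplusN LminusN; apply/funext => x; apply/propext.
by split=> [[a [b [Ca [Cb ->]]]] | [a [b [Ca [Cb ->]]]]]; exists b, a; rewrite addrC.
Qed.

End Lpm.

Lemma lat_dc_opp n (C : 'M[int]_n) : lat_dc (- C) = lat_dc C.
Proof. by rewrite /lat_dc /cosets_Lpm in_LpmN. Qed.

Section Involution.
Variables (n : nat) (G C : 'M[int]_n).
Hypothesis C_inv : lat_involution G C.
Implicit Types x y a b : 'rV[int]_n.
Local Notation "<< x , y >>" := (lat_form G x y).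

Lemma mulmxCC x : x *m C *m C = x.
Proof. by case: C_inv => _ CC; rewrite -mulmxA CC mulmx1. Qed.

Lemma formCC x y : << x *m C, y *m C >> = << x, y >>.
Proof. by case: C_inv => iso _; apply: iso. Qed.

Lemma form_Lplus_Lminus a b : Lplus C a -> Lminus C b -> << a, b >> = 0.
Proof. by move=> Ca Cb; have := formCC a b; rewrite Ca Cb formNr; lia. Qed.

Lemma in_Lpm_double x : in_Lpm C (x *+ 2).
Proof.
exists (x + x *m C), (x - x *m C); rewrite /Lplus /Lminus mulmxDl mulmxBl mulmxCC.
by rewrite addrC opprB addrACA subrr addr0 mulr2n.
Qed.

Lemma lat_involution_opp : lat_involution G (- C).
Proof.
case: C_inv => iso CC; split; last by rewrite mulmxN mulNmx opprK.
by move=> x y; rewrite !mulmxN formNl formNr opprK iso.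
Qed.

Lemma gram_trC : G *m C^T = C *m G.
Proof.
have CGC : C *m G *m C^T = G.
  apply/matrixP => i j; have := formCC (delta_mx 0 i) (delta_mx 0 j).
  by rewrite /lat_form trmx_mul !mulmxA trmx_delta -!rowE -!row_mul -!colE !mxE.
by case: C_inv => _ CC; rewrite -[in RHS]CGC !mulmxA CC mul1mx.
Qed.

End Involution.

Lemma mulmx_refl n (G : 'M[int]_n) (v x : 'rV[int]_n) :
  x *m lat_refl G v = x + lat_form G x v *: v.
Proof.
rewrite /lat_refl mulmxDr mulmx1 !mulmxA; congr (_ + _).
by rewrite [x *m G *m v^T]mx11_scalar mul_scalar_mx.
Qed.

Lemma lat_refl_involutive n (G : 'M[int]_n) (v : 'rV[int]_n) :
  lat_form G v v = -2 -> lat_refl G v *m lat_refl G v = 1%:M.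
Proof.
move=> vv; apply: eq_mx_mulmx => x; rewrite mulmxA !mulmx_refl mulmx1.
rewrite formDl formZl vv -addrA -scalerDl.
have -> : lat_form G x v + (lat_form G x v + lat_form G x v * -2) = 0 by ring.
by rewrite scale0r addr0.
Qed.

Section Reflection.
Variables (n : nat) (G C : 'M[int]_n) (v : 'rV[int]_n).
Hypothesis G_sym : lat_symmetric_gram G.
Hypothesis C_inv : lat_involution G C.
Hypothesis v_minus : Lminus C v.
Implicit Types x y a b : 'rV[int]_n.
Local Notation "<< x , y >>" := (lat_form G x y).
Local Notation D := (lat_cv G C v).

Lemma formCv x : << x *m C, v >> = - << x, v >>.
Proof. by rewrite -(formCC C_inv) (mulmxCC C_inv) v_minus formNr. Qed.

Lemma mulmx_cv x : x *m D = x *m C - << x, v >> *: v.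
Proof. by rewrite /lat_cv mulmxA mulmx_refl mulmxDl -scalemxAl v_minus scalerN. Qed.

Lemma form_mulmx_cv x : << x, x *m D >> = << x, x *m C >> - << x, v >> * << x, v >>.
Proof. by rewrite mulmx_cv formBr formZr. Qed.

Lemma lat_wu_element_cv : lat_wu_element G C v <-> lat_even_involution G D.
Proof.
split=> [[_ [_ wu]] x | Deven].
  rewrite form_mulmx_cv; have := wu x; have := dvdz2_sqr_sub << x, v >>.
  by move: (_ * _) => s; lia.
split=> //; split=> [l Cl | x].
  have := Deven l; rewrite form_mulmx_cv Cl formNr formC //.
  by rewrite addrAC addNr add0r rpredN dvdz2M orbb.
have := Deven x; rewrite form_mulmx_cv; have := dvdz2_sqr_sub << x, v >>.
by move: (_ * _) => s; lia.
Qed.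

Hypothesis v_norm : lat_form G v v = -2.

Lemma mulmx_cv_v : v *m D = v.
Proof. by rewrite mulmx_cv v_minus v_norm scaleNr opprK scaler_nat mulr2n addKr. Qed.

Lemma lat_involution_cv : lat_involution G D.
Proof.
split=> [x y | ].
  rewrite !mulmx_cv formBl !formBr !formZl !formZr (formCC C_inv) !formCv.
  by rewrite (formC G_sym v) formCv v_norm; lia.
apply: eq_mx_mulmx => x; rewrite mulmxA mulmx1 [x *m D]mulmx_cv mulmxBl -scalemxAl.
by rewrite mulmx_cv_v mulmx_cv (mulmxCC C_inv) formCv scaleNr opprK addrK.
Qed.

Lemma lat_cv_opp_cv : lat_cv G (- D) v = - C.
Proof. by rewrite /lat_cv mulmxN mulmxA lat_refl_involutive // mul1mx. Qed.

Lemma Lplus_cv a : Lplus C a -> Lplus D a.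
Proof.
move=> Ca; rewrite /Lplus mulmx_cv Ca.
by rewrite (form_Lplus_Lminus C_inv Ca v_minus) scale0r subr0.
Qed.

Lemma Lminus_cv b : Lminus D b -> Lminus C b.
Proof.
rewrite /Lminus mulmx_cv => Db.
have := congr1 (lat_form G ^~ v) Db; rewrite formBl formZl formCv v_norm formNl.
move=> bv; have bv0 : << b, v >> = 0 by lia.
by move: Db; rewrite bv0 scale0r subr0.
Qed.

Lemma in_Lpm_Lplus_cv a : Lplus D a -> (2 %| << a, v >>)%Z -> in_Lpm C a.
Proof.
rewrite /Lplus mulmx_cv => Da /dvdzP [s av].
have aC : a *m C = a + << a, v >> *: v by rewrite -{2}Da subrK.
exists (a + s *: v), (- (s *: v)); split; last split; last by rewrite addrK.
  rewrite /Lplus mulmxDl aC -scalemxAl v_minus av scalerN -addrA -scalerBl.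
  by congr (_ + _ *: _); lia.
by rewrite /Lminus mulNmx -scalemxAl v_minus scalerN.
Qed.

Lemma even_form_Lplus_cv l0 l :
  Lminus C l0 -> ~~ (2 %| << v, l0 >>)%Z -> Lplus D l -> (2 %| << v, l >>)%Z.
Proof.
move=> Cl0 vl0; rewrite /Lplus mulmx_cv => /eqP; rewrite subr_eq => /eqP Cl.
have := formCC C_inv l l0; rewrite Cl Cl0 formDl formZl !formNr formC // => E.
have : (2 %| << l, v >> * << v, l0 >>)%Z.
  apply/dvdzP; exists (- << l0, l >>); move: E; rewrite mulrN.
  by move: (_ * _) => s; lia.
by rewrite dvdz2M (negbTE vl0) orbF formC.
Qed.

Lemma in_Lpm_cv : lat_even_elt G C v -> forall x, in_Lpm C x -> in_Lpm D x.
Proof.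
move=> v_even _ [a [b [Ca [Cb ->]]]].
have /dvdzP [t bv] : (2 %| << b, v >>)%Z by rewrite formC //; apply: v_even.
exists (a - t *: v), (b + t *: v); split; last split; last by rewrite addrACA addNr addr0.
  by rewrite /Lplus mulmxBl -scalemxAl mulmx_cv_v (Lplus_cv Ca).
rewrite /Lminus mulmx_cv mulmxDl -scalemxAl v_minus Cb formDl formZl v_norm bv.
have -> : t * 2 + t * -2 = 0 by ring.
by rewrite scale0r subr0 opprD scalerN.
Qed.

Variable x0 : 'rV[int]_n.
Hypothesis x0_v : x0 - x0 *m C = v.

Lemma form_x0_v : << x0, v >> = -1.
Proof. by have := congr1 (lat_form G ^~ v) x0_v; rewrite formBl formCv v_norm; lia. Qed.

Lemma Lplus_cv_x0 : Lplus D x0.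
Proof. by rewrite /Lplus mulmx_cv form_x0_v scaleN1r opprK -x0_v addrC subrK. Qed.

Lemma not_in_Lpm_x0 : ~ in_Lpm C x0.
Proof.
move=> [a [b [Ca [Cb x0E]]]].
have v2b : v = b *+ 2 by rewrite -x0_v x0E mulmxDl Ca Cb opprD opprK addrACA subrr add0r.
by move: v_norm; rewrite v2b mulr2n formDl !formDr; lia.
Qed.

Lemma in_Lpm_cv_split y : in_Lpm D y -> in_Lpm C y \/ in_Lpm C (y - x0).
Proof.
move=> [a [b [Da [Db ->]]]]; have Cb := Lminus_cv Db.
have [av | ax0v] : (2 %| << a, v >>)%Z \/ (2 %| << a - x0, v >>)%Z.
- by rewrite formBl form_x0_v; lia.
- by left; apply: in_Lpm_add; [apply: in_Lpm_Lplus_cv | apply: in_Lpm_Lminus].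
right; rewrite addrAC; apply: in_Lpm_add; last exact: in_Lpm_Lminus.
by apply: in_Lpm_Lplus_cv ax0v; rewrite /Lplus mulmxBl Da Lplus_cv_x0.
Qed.

End Reflection.

Definition red2 m k (A : 'M[int]_(m, k)) : 'M['F_2]_(m, k) := map_mx intr A.
Definition lift2 m k (A : 'M['F_2]_(m, k)) : 'M[int]_(m, k) :=
  map_mx (fun b : 'F_2 => (b : nat)%:Z) A.

Lemma dvdz2_intr (z : int) : (2 %| z)%Z = ((intr z : 'F_2) == 0).
Proof. by rewrite (dvdz_pcharf (pchar_Fp (isT : prime 2))). Qed.

Section Mod2.
Variables m k : nat.
Implicit Types A B : 'M[int]_(m, k).

Lemma lift2K : cancel (@lift2 m k) (@red2 m k).
Proof. by move=> A; apply/matrixP => i j; rewrite !mxE -[RHS]natr_Zp. Qed.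

Lemma red2B A B : red2 (A - B) = red2 A - red2 B.
Proof. exact: map_mxB. Qed.

Lemma red2_eq0 A : red2 A = 0 -> exists B, A = B *+ 2.
Proof.
move=> A0; exists (map_mx (fun z => (z %/ 2)%Z) A); apply/matrixP => i j.
have : (2 %| A i j)%Z.
  by rewrite dvdz2_intr; have /matrixP/(_ i j) := A0; rewrite !mxE => ->.
by rewrite !mxE => /divzK; lia.
Qed.

Lemma red2_double B : red2 (B *+ 2) = 0.
Proof. by apply/matrixP => i j; rewrite !mxE; apply/eqP; rewrite -dvdz2_intr; lia. Qed.

Lemma double_mx_inj : injective (fun B : 'M[int]_(m, k) => B *+ 2).
Proof.
move=> A B /matrixP AB; apply/matrixP => i j.
by have := AB i j; rewrite !mulmxnE; move: (A i j) (B i j) => a b; lia.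
Qed.

End Mod2.

Lemma red2M m k l (A : 'M[int]_(m, k)) (B : 'M[int]_(k, l)) :
  red2 (A *m B) = red2 A *m red2 B.
Proof. exact: map_mxM. Qed.

Lemma red2T m k (A : 'M[int]_(m, k)) : red2 A^T = (red2 A)^T.
Proof. by rewrite /red2 map_trmx. Qed.

Lemma submx_ker_orth (F : fieldType) m k (A : 'M[F]_(m, k)) (u : 'rV[F]_k) :
  (forall y : 'cV[F]_k, A *m y = 0 -> u *m y = 0) -> (u <= A)%MS.
Proof.
move=> orth; rewrite submxE; apply/eqP/matrixP => i j.
suff /colP/(_ i) : col j (u *m cokermx A) = 0 by rewrite !mxE.
by rewrite colE -mulmxA -colE orth // colE mulmxA mulmx_coker mul0mx.
Qed.

Section EvenLminus.
Variables (n : nat) (G C : 'M[int]_n) (v : 'rV[int]_n).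
Hypothesis G_sym : lat_symmetric_gram G.
Hypothesis G_unimod : lat_unimodular G.
Hypothesis C_inv : lat_involution G C.
Hypothesis v_minus : Lminus C v.
Hypothesis v_even : lat_even_elt G C v.
Local Notation "<< x , y >>" := (lat_form G x y).
Local Notation A := (1%:M - C).

Lemma red2_gram_unit : red2 G \in unitmx.
Proof.
rewrite unitmxE unitfE /red2 det_map_mx.
by case: G_unimod => ->; rewrite ?rmorphN rmorph1 ?oppr_eq0 oner_eq0.
Qed.

Lemma Lminus_half y b w : Lminus C b -> y *m A - b = w *+ 2 -> Lminus C w.
Proof.
move=> Cb yAb; have wC : w *+ 2 *m C = - (w *+ 2).
  by rewrite -yAb mulmxBr mulmx1 !mulmxBl (mulmxCC C_inv) Cb [RHS]opprD opprB.
by apply: double_mx_inj; rewrite /= mulNrn -wC mulr2n mulmxDl.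
Qed.

Lemma even_form_of_red2_ker y : red2 (y *m A) = 0 -> (2 %| << v, y >>)%Z.
Proof.
move=> /red2_eq0 [w yA]; have Cw : Lminus C w.
  by apply: (Lminus_half (y := y) (b := 0)); rewrite ?subr0 // /Lminus mul0mx oppr0.
have yC : y *m C = y - w *+ 2 by rewrite -yA mulmxBr mulmx1 opprB addrC subrK.
have Cyw : Lplus C (y - w).
  by rewrite /Lplus mulmxBl yC Cw opprK mulr2n opprD addrA subrK.
rewrite -(subrK w y) formDr formC // (form_Lplus_Lminus C_inv Cyw v_minus) add0r.
exact: v_even.
Qed.

(* Mod 2, G is invertible and (1 - c) G = G (1 - c)^T, so the image of 1 - c is
   the G-orthogonal of its kernel, to which v is orthogonal because v is even. *)
Lemma red2_v_sub_im : (red2 v <= red2 A)%MS.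
Proof.
have G2 := red2_gram_unit.
have AG : red2 A *m red2 G = red2 G *m (red2 A)^T.
  rewrite -red2T -!red2M linearB /= trmx1 mulmxBl mulmxBr mul1mx mulmx1.
  by rewrite (gram_trC C_inv).
apply: submx_ker_orth => y Ay.
pose z := (invmx (red2 G) *m y)^T.
have yE : y = red2 G *m z^T by rewrite trmxK mulmxA mulmxV ?mul1mx.
have zA : z *m red2 A = 0.
  apply: trmx_inj; rewrite trmx_mul trmx0; apply: (can_inj (mulKmx G2)).
  by rewrite mulmx0 mulmxA -AG -mulmxA -yE.
have /dvdzP [k vz] : (2 %| << v, lift2 z >>)%Z.
  by apply: even_form_of_red2_ker; rewrite red2M lift2K.
rewrite yE mulmxA -[z]lift2K -red2T -!red2M; apply/matrixP => i j.
rewrite !ord1 [LHS]mxE -[(_ *m _) 0 0]/(<< v, lift2 z >>) vz mxE.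
by apply/eqP; rewrite -dvdz2_intr dvdz_mull.
Qed.

Lemma even_Lminus_im_1subC : exists x0, x0 - x0 *m C = v.
Proof.
have /submxP [x xA] := red2_v_sub_im.
have /red2_eq0 [z xAv] : red2 (lift2 x *m A - v) = 0.
  by rewrite red2B red2M lift2K -xA subrr.
have Cz := Lminus_half v_minus xAv.
have xC : lift2 x - lift2 x *m C = v + z *+ 2.
  by rewrite -xAv [RHS]addrC subrK mulmxBr mulmx1.
exists (lift2 x - z).
by rewrite mulmxBl Cz opprK opprD addrACA xC -opprD -mulr2n addrK.
Qed.

End EvenLminus.

Section Cosets.
Variable n : nat.
Implicit Types (P : 'rV[int]_n -> Prop) (x y : 'rV[int]_n).

Definition ncosets P : nat :=
  #|` fset_set [set [set y | P (x - y)] | x in [set: 'rV[int]_n]]%classic|%fset.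

Definition mod2_image P : {set 'rV['F_2]_n} := [set a | `[< P (lift2 a) >]].

Variable P : 'rV[int]_n -> Prop.
Hypothesis P_sub : forall x y, P x -> P y -> P (x - y).
Hypothesis P_double : forall x, P (x *+ 2).
Local Notation Q := (mod2_image P).

Lemma P_red2 x y : P x -> red2 x = red2 y -> P y.
Proof.
move=> Px /eqP; rewrite -subr_eq0 -red2B => /eqP /red2_eq0 [z xyz].
by rewrite -[y](subKr x) xyz; apply: P_sub.
Qed.

Lemma mem_mod2_image x : red2 x \in Q <-> P x.
Proof.
rewrite inE; split => [/asboolP|Px]; last apply/asboolP.
  by move/P_red2; apply; rewrite lift2K.
by apply: P_red2 Px _; rewrite lift2K.
Qed.

Lemma mod2_image0 : 0 \in Q.
Proof. by rewrite -(red2_double 0) mem_mod2_image. Qed.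

Lemma mod2_image_sub a b : a \in Q -> b \in Q -> a - b \in Q.
Proof. by rewrite -[a]lift2K -[b]lift2K -red2B !mem_mod2_image; apply: P_sub. Qed.

Let R a b := a - b \in Q.
Let mod2_classes := equivalence_partition R [set: 'rV['F_2]_n].

Lemma mod2_equivalence : {in [set: 'rV['F_2]_n] & &, equivalence_rel R}.
Proof.
have subrBB (a b c : 'rV['F_2]_n) : (a - c) - (a - b) = b - c.
  by rewrite opprB addrC addrA subrK.
move=> a b c _ _ _; rewrite /R subrr mod2_image0; split=> // Rab.
have Rba : b - a \in Q by rewrite -(subrBB a b a) mod2_image_sub // subrr mod2_image0.
by apply/idP/idP => [Rac | Rbc]; [rewrite -(subrBB a) | rewrite -(subrBB b)];
  apply: mod2_image_sub.
Qed.

Lemma card_mod2_class : {in mod2_classes, forall A : {set 'rV['F_2]_n}, #|A| = #|Q|}.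
Proof.
move=> _ /imsetP [a _ ->].
have -> : [set b in [set: 'rV['F_2]_n] | R a b] = [set a - q | q in Q].
  apply/setP => b; rewrite !inE /R; apply/idP/imsetP => [Rab | [q Qq ->]].
    by exists (a - b); rewrite ?subKr.
  by rewrite subKr.
by rewrite card_imset //; apply: inv_inj (subKr a).
Qed.

(* The coset of x is the preimage, under reduction mod 2, of the class of x modulo
   the image of the subgroup. *)
Lemma ncosetsE : ncosets P = #|mod2_classes|.
Proof.
pose preim (S : {set 'rV['F_2]_n}) := [set y : 'rV[int]_n | red2 y \in S]%classic.
have preim_inj : injective preim.
  move=> S1 S2 /seteqP [S12 S21]; apply/setP => a; apply/idP/idP => Sa.
    by have := S12 (lift2 a); rewrite /preim /= lift2K; apply.
  by have := S21 (lift2 a); rewrite /preim /= lift2K; apply.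
have cosetE x :
    [set y | P (x - y)]%classic = preim [set b in [set: _] | R (red2 x) b].
  by apply/seteqP; split => y; rewrite /preim /= !inE /R -red2B => /mem_mod2_image.
rewrite /ncosets; have -> : [set [set y | P (x - y)] | x in [set: 'rV[int]_n]]%classic =
    [set` [fset preim S | S in mod2_classes]%fset]%classic.
  apply/seteqP; split => [_ [x _ <-] | _ /imfsetP [_ /imsetP [a _ ->] ->]] /=.
    by apply/imfsetP; exists [set b in [set: _] | R (red2 x) b]; rewrite ?cosetE ?imset_f.
  by exists (lift2 a); rewrite // cosetE lift2K.
by rewrite set_fsetK card_imfset //= cardE.
Qed.

Lemma ncosets_mul_card : (ncosets P * #|Q|)%N = #|{: 'rV['F_2]_n}|.
Proof.
have classes_part := equivalence_partitionP mod2_equivalence.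
by rewrite ncosetsE -cardsT (card_uniform_partition card_mod2_class classes_part).
Qed.

End Cosets.

Section Index2.
Variables (n : nat) (P P' : 'rV[int]_n -> Prop) (x0 : 'rV[int]_n).
Hypothesis P_sub : forall x y, P x -> P y -> P (x - y).
Hypothesis P_double : forall x, P (x *+ 2).
Hypothesis P'_sub : forall x y, P' x -> P' y -> P' (x - y).
Hypothesis P'_double : forall x, P' (x *+ 2).
Hypothesis P_P' : forall x, P x -> P' x.
Hypothesis P'_split : forall y, P' y -> P y \/ P (y - x0).
Hypothesis P'_x0 : P' x0.
Hypothesis P_x0 : ~ P x0.
Local Notation Q := (mod2_image P).
Local Notation Q' := (mod2_image P').

Lemma card_mod2_image_index2 : #|Q'| = (2 * #|Q|)%N.
Proof.
have memQ := mem_mod2_image P_sub P_double.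
have memQ' := mem_mod2_image P'_sub P'_double.
have QQ' a : a \in Q -> a \in Q' by rewrite -[a]lift2K memQ memQ'; apply: P_P'.
have Q'sub := mod2_image_sub P'_sub P'_double.
have Q'E : Q' = Q :|: [set red2 x0 + q | q in Q].
  apply/setP => a; apply/idP/setUP => [| [/QQ' // | /imsetP [q Qq ->]]].
    rewrite -[a]lift2K memQ' => /P'_split [Pa | Pax0]; [left | right].
      by rewrite memQ.
    by apply/imsetP; exists (red2 (lift2 a - x0)); rewrite ?memQ // red2B addrC subrK.
  rewrite -[q]opprK Q'sub ?memQ' // -sub0r Q'sub ?QQ' //.
  exact: mod2_image0.
have QQx0 : [disjoint Q & [set red2 x0 + q | q in Q]].
  apply/pred0P => a /=; apply/andP => -[Qa /imsetP [q Qq aE]]; apply: P_x0.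
  rewrite -memQ aE in Qa *.
  by rewrite -(addrK q (red2 x0)) (mod2_image_sub P_sub P_double).
rewrite Q'E cardsU (disjoint_setI0 QQx0) cards0 subn0 card_imset; last exact: addrI.
by rewrite addnn -mul2n.
Qed.

Lemma logn_ncosets_index2 : logn 2 (ncosets P) = (logn 2 (ncosets P')).+1.
Proof.
have cP := ncosets_mul_card P_sub P_double.
have cP' := ncosets_mul_card P'_sub P'_double.
have Q_gt0 : (0 < #|Q|)%N by apply/card_gt0P; exists 0; apply: mod2_image0.
have cP'_gt0 : (0 < ncosets P')%N.
  have : (0 < #|{: 'rV['F_2]_n}|)%N by apply/card_gt0P; exists 0.
  by rewrite -cP' muln_gt0 => /andP [].
have -> : ncosets P = (2 * ncosets P')%N.
  apply/eqP; rewrite -(eqn_pmul2r Q_gt0) cP -cP' card_mod2_image_index2.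
  by rewrite mulnCA mulnA.
by rewrite lognM // lognE.
Qed.

End Index2.

Lemma lat_dc_cv_even n (G C : 'M[int]_n) (v : 'rV[int]_n) :
    lat_symmetric_gram G -> lat_unimodular G -> lat_involution G C ->
    Lminus C v -> lat_form G v v = -2 ->
  lat_even_elt G C v -> (lat_dc (lat_cv G C v)).+1 = lat_dc C.
Proof.
move=> G_sym G_unimod C_inv v_minus v_norm v_even.
set D := lat_cv G C v.
have [x0 x0v] := even_Lminus_im_1subC G_sym G_unimod C_inv v_minus v_even.
have D_inv := lat_involution_cv G_sym C_inv v_minus v_norm.
apply/esym/(@logn_ncosets_index2 _ _ _ x0).
- exact: (@in_Lpm_sub _ C).
- exact: (in_Lpm_double C_inv).
- exact: (@in_Lpm_sub _ D).
- exact: (in_Lpm_double D_inv).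
- exact: (in_Lpm_cv G_sym C_inv v_minus v_norm v_even).
- exact: (in_Lpm_cv_split C_inv v_minus v_norm x0v).
- exact/in_Lpm_Lplus/(Lplus_cv_x0 C_inv v_minus v_norm x0v).
- exact: (not_in_Lpm_x0 v_norm x0v).
Qed.

Lemma lat_dc_cv_odd n (G C : 'M[int]_n) (v : 'rV[int]_n) :
    lat_symmetric_gram G -> lat_unimodular G -> lat_involution G C ->
    Lminus C v -> lat_form G v v = -2 ->
  lat_odd_elt G C v -> lat_dc (lat_cv G C v) = (lat_dc C).+1.
Proof.
move=> G_sym G_unimod C_inv v_minus v_norm [l0 [Cl0 vl0]].
set D := lat_cv G C v.
have D'_inv := lat_involution_opp (lat_involution_cv G_sym C_inv v_minus v_norm).
have v_minus' : Lminus (- D) v by rewrite /Lminus mulmxN mulmx_cv_v.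
have v_even' : lat_even_elt G (- D) v.
  by move=> l; rewrite LminusN; apply: even_form_Lplus_cv Cl0 vl0.
have := lat_dc_cv_even G_sym G_unimod D'_inv v_minus' v_norm v_even'.
by rewrite lat_cv_opp_cv // !lat_dc_opp.
Qed.

Unset Implicit Arguments.
Set Strict Implicit.

Theorem proposition3p1 (n : nat) (G C : 'M[int]_n) (v : 'rV[int]_n) :
  lat_symmetric_gram G -> lat_unimodular G ->
  (lat_odd_lattice G -> exists w, lat_characteristic G w /\ (Lplus C w \/ Lminus C w)) ->
  lat_involution G C ->
  Lminus C v -> lat_form G v v = -2 ->
  [/\ (lat_odd_elt G C v -> lat_dc (lat_cv G C v) = (lat_dc C).+1),
      (lat_even_elt G C v -> (lat_dc (lat_cv G C v)).+1 = lat_dc C),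
      (lat_wu_element G C v <-> lat_even_involution G (lat_cv G C v))
    & (lat_even_involution G (lat_cv G C v) -> (lat_dc (lat_cv G C v)).+1 = lat_dc C)]%N.
Proof.
move=> G_sym G_unimod _ C_inv v_minus v_norm.
have even_case := lat_dc_cv_even G_sym G_unimod C_inv v_minus v_norm.
have wu := lat_wu_element_cv G_sym v_minus.
split; [exact: lat_dc_cv_odd | exact: even_case | exact: wu | ].
by move=> /wu [_ [v_even _]]; apply: even_case.
Qed.
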